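(* Let $N\ge2$ and $0=x_0<x_1<\dots<x_N=1$, $I=[0,1]$, $I_i=[x_{i-1},x_i]$, $|I_i|=x_i-x_{i-1}$, and for $i=1,\dots,N$ let $L_i(x)=x_{i-1}+|I_i|x$ (so $L_i(0)=x_{i-1}$, $L_i(1)=x_i$). Let $\alpha_i,\beta_i,\gamma_i$ be reals with $|\alpha_i|<1$, $|\beta_i|+|\gamma_i|<1$, let $p_i\in \mathrm{Lip}\,\lambda_i$ and $q_i\in\mathrm{Lip}\,\mu_i$ with $0<\lambda_i,\mu_i\le1$, and let $f_1,f_2:I\to\mathbb{R}$ be continuous functions satisfying, for all $x\in I$ and $i=1,\dots,N$, $$f_1(L_i(x))=\alpha_if_1(x)+\beta_if_2(x)+p_i(x),\qquad f_2(L_i(x))=\gamma_if_2(x)+q_i(x).$$ For indices $r_1,\dots,r_m\in\{1,\dots,N\}$ let $I_{r_1r_2\dots r_m}=L_{r_m}\circ L_{r_{m-1}}\circ\dots\circ L_{r_1}(I)$ (so $|I_{r_1\dots r_m}|=|I_{r_1}|\cdots|I_{r_m}|$), with the convention that the empty index gives $I$, and set $b_{r_1\dots r_m}=\int_{I_{r_1\dots r_m}}f_1(x)\,dx$, $a_{r_1\dots r_k}=\int_{I_{r_1\dots r_k}}f_2(x)\,dx$ (so $a$ with empty index is $\int_0^1 f_2$). Then $$b_{r_1r_2\dots r_m}=\sum_{k=1}^{m}\Big(\prod_{j=k+1}^{m}|I_{r_j}|\alpha_{r_j}\Big)|I_{r_k}|\Big(\int_{I_{r_1\dots r_{k-1}}}p_{r_k}(\xi)\,d\xi+\beta_{r_k}a_{r_1\dots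 r_{k-1}}\Big)+\prod_{j=1}^{m}\big(|I_{r_j}|\alpha_{r_j}\big)\int_0^1 f_1(\xi)\,d\xi .$$
   Context: $\mathrm{Lip}\,\lambda$ denotes the class of functions $g$ on $I$ with $|g(x)-g(y)|\le C|x-y|^{\lambda}$ for some constant $C$ and all $x,y\in I$. The functions $f_1,f_2$ arise as the components of the continuous function whose graph is the attractor of the IFS $\omega_i(x,y,z)=(L_i(x),\alpha_iy+\beta_iz+p_i(x),\gamma_iz+q_i(x))$ interpolating generalized data $(x_i,y_i,z_i)$; $f_1$ is the coalescence hidden variable fractal interpolation function. *)

From Stdlib Require Import Reals Lra.
From Coquelicot Require Import Coquelicot.
Open Scope R_scope.

Definition Lmap (x : nat -> R) (i : nat) (t : R) : R :=
  x (i - 1)%nat + (x i - x (i - 1)%nat) * t.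

Definition len (x : nat -> R) (i : nat) : R := x i - x (i - 1)%nat.

Fixpoint Lcomp (x : nat -> R) (r : nat -> nat) (k : nat) (t : R) : R :=
  match k with
  | O => t
  | S k' => Lmap x (r (S k')) (Lcomp x r k' t)
  end.

(* The interval I_{r_1...r_k} = Lcomp x r k (I) = [Lcomp x r k 0, Lcomp x r k 1]
   (each L_i is increasing); integral over it: *)
Definition int_over (x : nat -> R) (r : nat -> nat) (k : nat) (f : R -> R) : R :=
  RInt f (Lcomp x r k 0) (Lcomp x r k 1).

Fixpoint sum1 (m : nat) (f : nat -> R) : R :=
  match m with
  | O => 0
  | S m' => sum1 m' f + f (S m')
  end.

(* prod_{j=k+1}^{m} f j  (empty product = 1) *)
Fixpoint prod_from (k m : nat) (f : nat -> R) : R :=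
  match m with
  | O => 1
  | S m' => if Nat.leb (S m') k then 1 else prod_from k m' f * f (S m')
  end.

Definition Lip_on_I (lam : R) (g : R -> R) : Prop :=
  exists C : R, forall s t : R, 0 <= s <= 1 -> 0 <= t <= 1 -> s <> t ->
    Rabs (g s - g t) <= C * Rpower (Rabs (s - t)) lam.

Definition continuous_on_I (f : R -> R) : Prop :=
  forall t : R, 0 <= t <= 1 ->
    filterlim f (within (fun y => 0 <= y <= 1) (locally t)) (locally (f t)).

From Stdlib Require Import Reals Lra Lia.
From Coquelicot Require Import Coquelicot.
Open Scope R_scope.

(* Substituting t = L_i(s) in the self-affinity equation for f1 gives the
   one-step recursion
     b_{r_1...r_m} = |I_{r_m}| (alpha_{r_m} b_{r_1...r_{m-1}}
                                + beta_{r_m} a_{r_1...r_{m-1}} + int p_{r_m}),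
   and the claimed formula is the solution of this first-order linear recursion
   by variation of constants. *)

Lemma prod_from_S k n f :
  (k <= n)%nat -> prod_from k (S n) f = prod_from k n f * f (S n).
Proof.
  intros Hk; simpl; destruct k as [|k]; [reflexivity|].
  rewrite (proj2 (Nat.leb_gt n k)) by lia; reflexivity.
Qed.

Lemma prod_from_diag n f : prod_from n n f = 1.
Proof. destruct n as [|n]; simpl; [|rewrite Nat.leb_refl]; reflexivity. Qed.

Lemma sum1_ext n g h :
  (forall k, (1 <= k <= n)%nat -> g k = h k) -> sum1 n g = sum1 n h.
Proof.
  induction n as [|n IH]; intros Hgh; simpl; [reflexivity|].
  rewrite IH by (intros; apply Hgh; lia).
  rewrite Hgh by lia; reflexivity.
Qed.

Lemma sum1_scal n c g : sum1 n (fun k => c * g k) = c * sum1 n g.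
Proof. induction n as [|n IH]; simpl; [|rewrite IH]; ring. Qed.

Lemma sum1_S n g : sum1 (S n) g = sum1 n g + g (S n).
Proof. reflexivity. Qed.

Lemma linear_recurrence_solution (m : nat) (A c b : nat -> R) :
  (forall n, (n < m)%nat -> b (S n) = A (S n) * b n + c (S n)) ->
  b m = sum1 m (fun k => prod_from k m A * c k) + prod_from 0 m A * b 0%nat.
Proof.
  induction m as [|m IH]; intros Hrec.
  - simpl; ring.
  - rewrite Hrec by lia.
    rewrite IH by (intros; apply Hrec; lia).
    rewrite sum1_S, (sum1_ext m (fun k => prod_from k (S m) A * c k)
                      (fun k => A (S m) * (prod_from k m A * c k)))
      by (intros k Hk; rewrite prod_from_S by lia; ring).
    rewrite sum1_scal, prod_from_diag, (prod_from_S 0) by lia.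
    ring.
Qed.

(* [continuous_on_I] only gives continuity relative to [0,1]; composing with
   this retraction of R onto [0,1] yields a function continuous on all of R. *)
Definition clamp01 (t : R) : R := Rmax 0 (Rmin 1 t).

Lemma clamp01_mem t : 0 <= clamp01 t <= 1.
Proof. unfold clamp01, Rmax, Rmin; repeat destruct Rle_dec; lra. Qed.

Lemma clamp01_id t : 0 <= t <= 1 -> clamp01 t = t.
Proof. intros; unfold clamp01, Rmax, Rmin; repeat destruct Rle_dec; lra. Qed.

Lemma clamp01_continuous z : continuous clamp01 z.
Proof.
  apply filterlim_locally; intros eps; exists eps; intros y Hy.
  change (Rabs (clamp01 y - clamp01 z) < eps).
  change (Rabs (y - z) < eps) in Hy.
  unfold clamp01, Rmax, Rmin in *; repeat destruct Rle_dec;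
    unfold Rabs in *; repeat destruct Rcase_abs; lra.
Qed.

Lemma continuous_on_I_comp f g :
  continuous_on_I f -> (forall t, continuous g t) ->
  (forall t, 0 <= t <= 1 -> 0 <= g t <= 1) ->
  continuous_on_I (fun s => f (g s)).
Proof.
  intros Hf Hg HgI t Ht.
  apply (filterlim_comp _ _ _ g f _ (within (fun y => 0 <= y <= 1) (locally (g t))));
    [|apply Hf, HgI, Ht].
  intros P HP; apply Hg in HP.
  unfold within, filtermap in *.
  eapply filter_imp; [|exact HP]; intros s HPs Hs; apply HPs, HgI, Hs.
Qed.

Lemma continuous_clamp01_extension f :
  continuous_on_I f -> forall z, continuous (fun t => f (clamp01 t)) z.
Proof.
  intros Hf z.
  apply (filterlim_comp _ _ _ clamp01 f _
           (within (fun y => 0 <= y <= 1) (locally (clamp01 z))));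
    [|apply Hf, clamp01_mem].
  intros P HP; apply clamp01_continuous in HP.
  unfold within, filtermap in *.
  eapply filter_imp; [|exact HP]; intros s Hs; apply Hs, clamp01_mem.
Qed.

Lemma ex_RInt_continuous_on_I f a b :
  continuous_on_I f -> 0 <= a <= 1 -> 0 <= b <= 1 -> ex_RInt f a b.
Proof.
  intros Hf Ha Hb.
  apply (ex_RInt_ext (fun t => f (clamp01 t))).
  - intros t Ht; rewrite clamp01_id; [reflexivity|].
    unfold Rmin, Rmax in Ht; destruct Rle_dec; lra.
  - apply (@ex_RInt_continuous R_CompleteNormedModule); intros z _.
    apply continuous_clamp01_extension, Hf.
Qed.

Lemma Lmap_affine x i t : Lmap x i t = len x i * t + x (i - 1)%nat.
Proof. unfold Lmap, len; ring. Qed.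

Lemma Lmap_continuous x i z : continuous (Lmap x i) z.
Proof.
  apply (@continuous_plus R_UniformSpace R_AbsRing R_NormedModule
           (fun _ => x (i - 1)%nat) (fun t => scal (x i - x (i - 1)%nat) t)).
  - apply continuous_const.
  - apply (@continuous_scal_r R_UniformSpace R_AbsRing R_NormedModule), continuous_id.
Qed.

Lemma RInt_Lmap x i f u v :
  ex_RInt (fun t => f (Lmap x i t)) u v -> ex_RInt f (Lmap x i u) (Lmap x i v) ->
  RInt f (Lmap x i u) (Lmap x i v) = len x i * RInt (fun t => f (Lmap x i t)) u v.
Proof.
  intros HfL Hf.
  transitivity (scal (len x i) (RInt (fun t => f (Lmap x i t)) u v)); [|reflexivity].
  rewrite <- (@RInt_scal R_CompleteNormedModule _ u v (len x i) HfL).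
  rewrite !Lmap_affine in Hf |- *.
  rewrite <- (@RInt_comp_lin R_CompleteNormedModule f _ _ u v Hf).
  apply RInt_ext; intros t _; rewrite Lmap_affine; reflexivity.
Qed.

Lemma RInt_lincomb f g h a b u v :
  ex_RInt f u v -> ex_RInt g u v -> ex_RInt h u v ->
  RInt (fun t => a * f t + b * g t + h t) u v
  = a * RInt f u v + b * RInt g u v + RInt h u v.
Proof.
  intros Hf Hg Hh.
  assert (Haf : ex_RInt (fun t => scal a (f t)) u v) by (apply ex_RInt_scal, Hf).
  assert (Hbg : ex_RInt (fun t => scal b (g t)) u v) by (apply ex_RInt_scal, Hg).
  assert (Hafbg : ex_RInt (fun t => plus (scal a (f t)) (scal b (g t))) u v)
    by (apply ex_RInt_plus; assumption).
  transitivity (plus (plus (scal a (RInt f u v)) (scal b (RInt g u v))) (RInt h u v));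
    [|reflexivity].
  rewrite <- (@RInt_scal R_CompleteNormedModule f), <- (@RInt_scal R_CompleteNormedModule g) by assumption.
  rewrite <- (@RInt_plus R_CompleteNormedModule (fun t => scal a (f t))) by assumption.
  rewrite <- (@RInt_plus R_CompleteNormedModule (fun t => plus (scal a (f t)) (scal b (g t)))) by assumption.
  reflexivity.
Qed.

Lemma RInt_Lmap_self_affine x i (f g h : R -> R) (a b u v : R) :
  continuous_on_I f -> continuous_on_I g ->
  (forall t, 0 <= t <= 1 -> 0 <= Lmap x i t <= 1) ->
  (forall t, 0 <= t <= 1 -> f (Lmap x i t) = a * f t + b * g t + h t) ->
  0 <= u <= 1 -> 0 <= v <= 1 ->
  RInt f (Lmap x i u) (Lmap x i v)
  = len x i * (a * RInt f u v + b * RInt g u v + RInt h u v).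
Proof.
  intros Hf Hg HL Hfeq Hu Hv.
  assert (Huv : forall t, Rmin u v < t < Rmax u v -> 0 <= t <= 1)
    by (intros t Ht; unfold Rmin, Rmax in Ht; destruct Rle_dec; lra).
  assert (Ef : ex_RInt f u v) by (apply ex_RInt_continuous_on_I; assumption).
  assert (Eg : ex_RInt g u v) by (apply ex_RInt_continuous_on_I; assumption).
  assert (EfL : ex_RInt (fun t => f (Lmap x i t)) u v).
  { apply ex_RInt_continuous_on_I; [|assumption..].
    apply continuous_on_I_comp; [assumption|apply Lmap_continuous|assumption]. }
  assert (Eh : ex_RInt h u v).
  { apply (@ex_RInt_ext R_NormedModule
             (fun t => minus (minus (f (Lmap x i t)) (scal a (f t))) (scal b (g t)))).
    - intros t Ht; change (f (Lmap x i t) - a * f t - b * g t = h t).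
      rewrite Hfeq by auto; ring.
    - apply (@ex_RInt_minus R_NormedModule);
        [apply (@ex_RInt_minus R_NormedModule); [exact EfL|]|];
        apply (@ex_RInt_scal R_NormedModule); assumption. }
  rewrite (RInt_Lmap x i f u v EfL) by (apply ex_RInt_continuous_on_I; auto).
  rewrite <- RInt_lincomb by assumption.
  f_equal; apply RInt_ext; intros t Ht; apply Hfeq, Huv, Ht.
Qed.

Section Partition.

Variables (N : nat) (x : nat -> R).
Hypotheses (hx0 : x 0%nat = 0) (hxN : x N = 1)
  (hxinc : forall i : nat, (1 <= i <= N)%nat -> x (i - 1)%nat < x i).

Lemma partition_le i j : (i <= j <= N)%nat -> x i <= x j.
Proof.
  induction j as [|j IH]; intros Hij.
  - replace i with 0%nat by lia; lra.
  - destruct (Nat.eq_dec i (S j)) as [->|Hne]; [lra|].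
    assert (x j < x (S j)) by (rewrite <- (Nat.sub_0_r j) at 1; apply (hxinc (S j)); lia).
    assert (x i <= x j) by (apply IH; lia).
    lra.
Qed.

Lemma Lmap_mem_I i t :
  (1 <= i <= N)%nat -> 0 <= t <= 1 -> 0 <= Lmap x i t <= 1.
Proof.
  intros Hi Ht; unfold Lmap.
  assert (0 <= x (i - 1)%nat) by (rewrite <- hx0; apply partition_le; lia).
  assert (x i <= 1) by (rewrite <- hxN; apply partition_le; lia).
  assert (x (i - 1)%nat < x i) by (apply hxinc, Hi).
  nra.
Qed.

Lemma Lcomp_mem_I (r : nat -> nat) (m : nat) :
  (forall j, (1 <= j <= m)%nat -> (1 <= r j <= N)%nat) ->
  forall n t, (n <= m)%nat -> 0 <= t <= 1 -> 0 <= Lcomp x r n t <= 1.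
Proof.
  intros hr n; induction n as [|n IH]; intros t Hn Ht; simpl; [assumption|].
  apply Lmap_mem_I; [apply hr; lia|apply IH; [lia|assumption]].
Qed.

End Partition.

Theorem lemma3p1
  (N : nat) (HN : (2 <= N)%nat)
  (x : nat -> R) (hx0 : x 0%nat = 0) (hxN : x N = 1)
  (hxinc : forall i : nat, (1 <= i <= N)%nat -> x (i - 1)%nat < x i)
  (alpha beta gamma lam mu : nat -> R)
  (p q : nat -> R -> R) (f1 f2 : R -> R)
  (halpha : forall i : nat, (1 <= i <= N)%nat -> Rabs (alpha i) < 1)
  (hbg : forall i : nat, (1 <= i <= N)%nat -> Rabs (beta i) + Rabs (gamma i) < 1)
  (hlam : forall i : nat, (1 <= i <= N)%nat -> 0 < lam i <= 1)
  (hmu : forall i : nat, (1 <= i <= N)%nat -> 0 < mu i <= 1)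
  (hp : forall i : nat, (1 <= i <= N)%nat -> Lip_on_I (lam i) (p i))
  (hq : forall i : nat, (1 <= i <= N)%nat -> Lip_on_I (mu i) (q i))
  (hf1c : continuous_on_I f1) (hf2c : continuous_on_I f2)
  (hf1 : forall i : nat, (1 <= i <= N)%nat -> forall t : R, 0 <= t <= 1 ->
     f1 (Lmap x i t) = alpha i * f1 t + beta i * f2 t + p i t)
  (hf2 : forall i : nat, (1 <= i <= N)%nat -> forall t : R, 0 <= t <= 1 ->
     f2 (Lmap x i t) = gamma i * f2 t + q i t)
  (m : nat) (r : nat -> nat)
  (hr : forall j : nat, (1 <= j <= m)%nat -> (1 <= r j <= N)%nat) :
  int_over x r m f1 =
    sum1 m (fun k =>
      prod_from k m (fun j => len x (r j) * alpha (r j)) * len x (r k) *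
      (int_over x r (k - 1)%nat (p (r k)) + beta (r k) * int_over x r (k - 1)%nat f2))
    + prod_from 0 m (fun j => len x (r j) * alpha (r j)) * RInt f1 0 1.
Proof.
  set (A := fun j => len x (r j) * alpha (r j)).
  set (c := fun k => len x (r k) *
    (int_over x r (k - 1)%nat (p (r k)) + beta (r k) * int_over x r (k - 1)%nat f2)).
  assert (one_step : forall n, (n < m)%nat ->
    int_over x r (S n) f1 = A (S n) * int_over x r n f1 + c (S n)).
  { intros n Hn; unfold A, c, int_over; simpl Lcomp.
    assert (Hrn : (1 <= r (S n) <= N)%nat) by (apply hr; lia).
    assert (Hmem : forall t, 0 <= t <= 1 -> 0 <= Lcomp x r n t <= 1)
      by (intros; apply (Lcomp_mem_I N x hx0 hxN hxinc r m hr); [lia|assumption]).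
    rewrite (RInt_Lmap_self_affine x (r (S n)) f1 f2 (p (r (S n))) (alpha (r (S n))) (beta (r (S n))));
      [|assumption|assumption|intros; apply (Lmap_mem_I N); assumption|apply hf1, Hrn
       |apply Hmem; lra|apply Hmem; lra].
    simpl; rewrite Nat.sub_0_r; ring. }
  rewrite (linear_recurrence_solution m A c (fun n => int_over x r n f1) one_step).
  f_equal; apply sum1_ext; intros k _; unfold A, c; ring.
Qed.
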